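(* Let $B, C \in \mathbb{Z}$ be such that $x^2 + Bx + C$ is irreducible, and let $\beta$ be a real root of it. (i) If $B \geq 0$ and $C > 0$, then $p_\beta(\alpha) = \infty$ for all $\alpha \in \mathbb{Z}[\beta]$. (ii) If $B > 0$ and $-B - 1 < C < 0$, then $p_\beta(\alpha) \in \{0, 1, \infty\}$ for every $\alpha \in \mathbb{R}$. Moreover, if $\alpha = c_j\beta^j + c_{j-1}\beta^{j-1} + \dots + c_1\beta + c_0$ with all $c_i \in \mathbb{Z}_{\geq 0}$, then $p_\beta(\alpha) = 1$ if and only if $c_i \in \{0, 1, \ldots, -C-1\}$ for every $i$.
   Context: For $\beta, \alpha \in \mathbb{C}$, $p_\beta(\alpha) \in \mathbb{Z}_{\geq 0}\cup\{\infty\}$ is the number of polynomials $f \in \mathbb{Z}_{\geq 0}[x]$ (non-negative integer coefficients) with $f(\beta) = \alpha$. *)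

From HB Require Import structures.
From mathcomp Require Import all_boot all_order all_algebra.
From mathcomp Require Import finmap boolp classical_sets cardinality reals.
Set Implicit Arguments. Unset Strict Implicit. Unset Printing Implicit Defensive.
Import Order.TTheory GRing.Theory Num.Theory.
Local Open Scope ring_scope.
Local Open Scope classical_set_scope.

Definition quad (R : nzRingType) (B C : int) : {poly R} :=
  'X^2 + (B%:~R : R) *: 'X + (C%:~R : R)%:P.

Definition zeval (R : realType) (f : {poly int}) (beta : R) : R :=
  (map_poly (fun z : int => z%:~R : R) f).[beta].

Definition nonneg_poly (f : {poly int}) : Prop := forall i : nat, 0 <= f`_i.

Definition rep_set (R : realType) (beta alpha : R) : set {poly int} :=
  [set f | nonneg_poly f /\ zeval f beta = alpha].

(* p_beta(alpha) in Z_{>=0} \cup {oo}: Some n = n, None = infinity. *)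
Definition p_beta (R : realType) (beta alpha : R) : option nat :=
  if pselect (finite_set (rep_set beta alpha))
  then Some #|` fset_set (rep_set beta alpha)|
  else None.

Definition in_Zbeta (R : realType) (beta alpha : R) : Prop :=
  exists g : {poly int}, zeval g beta = alpha.

(* Write Q = x^2 + B x + C.  Since Q(beta) = 0, adding a multiple of Q to a
   representation f of alpha gives another one.  If some coefficient f_i is at
   least -C, then x^i Q, x^(i+1) Q, ... can be added one after the other without
   creating a negative coefficient (each copy raises the next coefficient by
   B >= -C), which gives infinitely many representations.  For C > 0 this
   applies to every alpha in Z[beta], which has a representation because
   -1 = (Q - 1)(beta) and Q - 1 has non-negative coefficients.  For
   -B - 1 < C < 0, if all coefficients of f are below -C and g is another
   representation, then f - g = q Q with q in Z[x] (beta is irrational), and the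
   bound on the coefficients of q Q forces those of q to be non-negative and
   non-decreasing, hence zero. *)
From mathcomp Require Import all_boot all_order all_algebra.
From mathcomp Require Import finmap boolp classical_sets cardinality reals.
From mathcomp Require Import zify.
Import Order.TTheory GRing.Theory Num.Theory.
Local Open Scope ring_scope.

Lemma p_beta_set0 (R : realType) (b a : R) :
  rep_set b a = set0 -> p_beta b a = Some 0%N.
Proof.
move=> rep_eq; rewrite /p_beta rep_eq.
case: pselect => [?|]; last by case; exact: finite_set0.
by rewrite fset_set0 cardfs0.
Qed.

Lemma p_beta_set1 (R : realType) (b a : R) f :
  rep_set b a = [set f]%classic -> p_beta b a = Some 1%N.
Proof.
move=> rep_eq; rewrite /p_beta rep_eq.
case: pselect => [?|]; last by case; exact: finite_set1.
by rewrite fset_set1 cardfs1.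
Qed.

Lemma p_beta_infinite (R : realType) (b a : R) (u : nat -> {poly int}) :
  injective u -> (forall k, rep_set b a (u k)) -> p_beta b a = None.
Proof.
move=> u_inj rep_u; rewrite /p_beta; case: pselect => [fin|//]; exfalso.
have preim_u : (u @^-1` rep_set b a = setT)%classic.
  by apply/seteqP; split=> k //= _; apply: rep_u.
apply: infinite_nat; rewrite -preim_u.
by apply: finite_preimage fin => k l _ _ /u_inj.
Qed.

Section ZEval.
Variables (R : realType) (b : R).

Lemma zevalD f g : zeval (f + g) b = zeval f b + zeval g b.
Proof. by rewrite /zeval rmorphD hornerD. Qed.

Lemma zevalB f g : zeval (f - g) b = zeval f b - zeval g b.
Proof. by rewrite /zeval rmorphB hornerD hornerN. Qed.

Lemma zevalM f g : zeval (f * g) b = zeval f b * zeval g b.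
Proof. by rewrite /zeval rmorphM hornerM. Qed.

Lemma zeval1 : zeval 1 b = 1.
Proof. by rewrite /zeval rmorph1 hornerC. Qed.

End ZEval.

Lemma size_irredp_root [F : fieldType] [p : {poly F}] [x : F] :
  irreducible_poly p -> root p x -> size p = 2%N.
Proof.
move=> irr; rewrite -dvdp_XsubCl => /(irr _); rewrite size_XsubC => /(_ isT).
by move/eqp_size <-; rewrite size_XsubC.
Qed.

Section Quadratic.
Context {B C : int}.

Lemma coef_quad (R : nzRingType) i : (quad R B C)`_i =
  if i == 0%N then C%:~R else if i == 1%N then B%:~R else if i == 2%N then 1 else 0.
Proof.
rewrite /quad !coefD coefXn coefZ coefX coefC.
by case: i => [|[|[|i]]] /=; rewrite ?mulr0 ?mulr1 ?add0r ?addr0.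
Qed.

Lemma size_quad (R : nzRingType) : size (quad R B C) = 3%N.
Proof.
rewrite /quad -addrA size_polyDl size_polyXn //.
apply: (leq_ltn_trans (size_polyD _ _)).
rewrite gtn_max (leq_ltn_trans (size_scale_leq _ _)) ?size_polyX //.
by rewrite (leq_ltn_trans (size_polyC_leq1 _)).
Qed.

Lemma quad_monic (R : nzRingType) : quad R B C \is monic.
Proof. by rewrite monicE /lead_coef size_quad coef_quad. Qed.

Lemma map_quad {R1 R2 : nzRingType} (f : {rmorphism R1 -> R2}) :
  map_poly f (quad R1 B C) = quad R2 B C.
Proof.
apply/polyP => i; rewrite coef_map /= !coef_quad.
by case: i => [|[|[|i]]] /=; rewrite ?rmorph_int ?rmorph1 ?rmorph0.
Qed.

Lemma horner1_quad : (quad int B C).[1] = 1 + B + C.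
Proof. by rewrite /quad !hornerE !intz. Qed.

Lemma zeval_quad (R : realType) (b : R) :
  root (quad R B C) b -> zeval (quad int B C) b = 0.
Proof. by rewrite -(map_quad (intr : {rmorphism int -> R})) => /eqP. Qed.

Lemma coef_mul_quad (q : {poly int}) n : (q * quad int B C)`_n =
  (if n is n'.+2 then q`_n' else 0) + (if n is n'.+1 then q`_n' else 0) * B + q`_n * C.
Proof.
rewrite /quad !mulrDr !coefD coefMXn -scalerAr coefZ coefMX coefMC !intz.
by case: n => [|[|n]] /=; rewrite ?mulr0 ?mul0r ?add0r ?addr0 ?subSS ?subn0 ?(mulrC B).
Qed.

Lemma quad_multiple_eq0 (q : {poly int}) : C < 0 -> - C <= B ->
  (forall n, (q * quad int B C)`_n <= - C - 1) -> q = 0.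
Proof.
move=> C_lt0 C_le_B small.
have step (a b x : int) : 0 <= a -> 0 <= b -> a + b * B + x * C <= - C - 1 -> b <= x.
  by move=> *; nia.
have incr n : 0 <= q`_n <= q`_n.+1.
  elim: n => [|n /andP[qn_ge0 qn_le]].
    have q0_ge0 : 0 <= q`_0.
      by apply: (step 0 0) => //; have := small 0%N; rewrite coef_mul_quad.
    rewrite q0_ge0; apply: (step 0) => //; have := small 1%N.
    by rewrite coef_mul_quad /= add0r.
  rewrite (le_trans qn_ge0 qn_le) /=; apply: (step q`_n) => //.
    exact: le_trans qn_le.
  by have := small n.+2; rewrite coef_mul_quad.
have mono : {homo (fun n => q`_n) : m n / (m <= n)%N >-> m <= n}.
  by apply: homo_leq => [//|y x z|n]; [exact: le_trans | case/andP: (incr n)].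
apply/polyP => k; rewrite coef0; apply/eqP; rewrite eq_le.
case/andP: (incr k) => -> _; rewrite andbT.
apply: le_trans (mono _ _ (leq_addr (size q) k)) _.
by rewrite nth_default ?leq_addl.
Qed.

End Quadratic.

Section Carry.
Variables (B C : int) (f : {poly int}) (i : nat).

Definition carry k := f + quad int B C * \sum_(j < k) 'X^(i + j).

Lemma carryS k : carry k.+1 = carry k + quad int B C * 'X^(i + k).
Proof. by rewrite /carry big_ord_recr mulrDr addrA. Qed.

Lemma zeval_carry (R : realType) (b : R) k :
  root (quad R B C) b -> zeval (carry k) b = zeval f b.
Proof. by move=> b_root; rewrite zevalD zevalM zeval_quad // mul0r addr0. Qed.

Lemma horner1_carry k : (carry k).[1] = f.[1] + (1 + B + C) *+ k.
Proof.
rewrite hornerD hornerM horner1_quad horner_sum.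
under eq_bigr do rewrite hornerXn expr1n.
by rewrite sumr_const card_ord mulr_natr.
Qed.

Lemma carry_nonneg : 0 <= B -> 0 <= B + C -> nonneg_poly f -> - C <= f`_i ->
  forall k, nonneg_poly (carry k) /\ - C <= (carry k)`_(i + k).
Proof.
move=> B_ge0 BC_ge0 f_ge0 fi_ge; elim=> [|k [g_ge0 g_ge]].
  by rewrite /carry big_ord0 mulr0 addr0 addn0.
rewrite carryS; move: (carry k) g_ge0 g_ge => g g_ge0 g_ge.
have coef_next m : (g + quad int B C * 'X^(i + k))`_m =
    g`_m + if (m < i + k)%N then 0 else (quad int B C)`_(m - (i + k)).
  by rewrite coefD mulrC coefXnM.
split=> [m|]; rewrite coef_next; last first.
  rewrite addnS ltnNge leqnSn subSnn coef_quad /= intz.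
  by apply: ler_wpDl; [exact: g_ge0 | lia].
case: ltnP => [_|/subnK <-]; first by rewrite addr0.
rewrite addnK coef_quad !intz; case: (m - (i + k))%N => [|[|[|d]]] /=.
- by rewrite add0n -lerBlDr sub0r.
- by rewrite addr_ge0.
- by rewrite addr_ge0.
- by rewrite addr0.
Qed.

End Carry.

Section QuadraticRoot.
Context {R : realType} {B C : int} {beta : R}.
Hypothesis beta_root : root (quad R B C) beta.

Lemma exists_nonneg_poly_zeval (g : {poly int}) : 0 <= B -> 0 < C ->
  exists2 f, nonneg_poly f & zeval f beta = zeval g beta.
Proof.
move=> B_ge0 C_gt0.
pose gp := map_poly (fun z : int => Num.max z 0) g.
pose gn := map_poly (fun z : int => Num.max (- z) 0) g.
have g_eq : g = gp - gn.
  apply/polyP => i; rewrite coefB !coef_map_id0 ?oppr0 ?maxxx //; move: g`_i => x; lia.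
exists (gp + gn * (quad int B C - 1)).
  move=> i; rewrite coefD coefM.
  apply: addr_ge0; first by rewrite coef_map_id0 ?maxxx // le_max lexx orbT.
  apply: sumr_ge0 => j _; apply: mulr_ge0.
    by rewrite coef_map_id0 ?oppr0 ?maxxx // le_max lexx orbT.
  by rewrite coefB coef1 coef_quad !intz; case: (i - j)%N => [|[|[|k]]] /=; lia.
by rewrite [in RHS]g_eq zevalB zevalD zevalM zevalB zeval_quad // zeval1 sub0r mulrN1.
Qed.

Lemma p_beta_large_coef (f : {poly int}) i :
  0 <= B -> 0 <= B + C -> nonneg_poly f -> - C <= f`_i ->
  p_beta beta (zeval f beta) = None.
Proof.
move=> B_ge0 BC_ge0 f_ge0 fi_ge; apply: (@p_beta_infinite _ _ _ (carry B C f i)).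
  have BC1_neq0 : 1 + B + C != 0 by lia.
  by move=> k l /(congr1 (horner^~ 1)); rewrite !horner1_carry => /addrI /(mulrIn BC1_neq0).
move=> k; split; first exact: (carry_nonneg _ _ _ _ B_ge0 BC_ge0 f_ge0 fi_ge k).1.
exact: zeval_carry.
Qed.

Hypothesis quad_irr : irreducible_poly (quad rat B C).

Lemma ratr_neq_quad_root (a : rat) : ratr a != beta.
Proof.
apply/eqP => a_beta; move: beta_root; rewrite -a_beta -(map_quad ratr) fmorph_root.
by move/(size_irredp_root quad_irr); rewrite size_quad.
Qed.

Lemma zeval_quad_root_size2 (r : {poly int}) :
  (size r <= 2)%N -> zeval r beta = 0 -> r = 0.
Proof.
move=> r_le2 r_zero; have zeval_r : zeval r beta = (r`_0)%:~R + (r`_1)%:~R * beta.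
  rewrite /zeval (horner_coef_wide (n := 2)); last exact: leq_trans (size_poly _ _) r_le2.
  by rewrite !big_ord_recr big_ord0 /= !coef_map_id0 // expr0 mulr1 add0r.
have r1_eq0 : r`_1 = 0.
  pose a : rat := - (r`_0)%:~R / (r`_1)%:~R.
  apply: (contra_neq_eq _ (ratr_neq_quad_root a)) => r1_neq0.
  have /eqP : (r`_0)%:~R + (r`_1)%:~R * beta = 0 by rewrite -zeval_r.
  rewrite addr_eq0 => /eqP r0_eq.
  rewrite /a fmorph_div rmorphN !rmorph_int r0_eq opprK [_ * beta]mulrC mulfK //.
  by rewrite intr_eq0.
have r0_eq0 : r`_0 = 0.
  by move: zeval_r; rewrite r_zero r1_eq0 mul0r addr0 => /esym/eqP; rewrite intr_eq0 => /eqP.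
apply/polyP => -[|[|i]]; rewrite coef0 //.
by rewrite nth_default // (leq_trans r_le2).
Qed.

Lemma quad_dvd_zeval_eq0 (h : {poly int}) :
  zeval h beta = 0 -> exists q, h = q * quad int B C.
Proof.
move=> h_zero; have h_eq := Pdiv.IdomainMonic.divp_eq (@quad_monic B C int) h.
suff mod_eq0 : h %% quad int B C = 0 by exists (h %/ quad int B C); rewrite {1}h_eq mod_eq0 addr0.
apply: zeval_quad_root_size2.
  by rewrite -ltnS -(@size_quad B C int) ltn_modp monic_neq0 // quad_monic.
by move: h_zero; rewrite {1}h_eq zevalD zevalM zeval_quad // mulr0 add0r.
Qed.

Lemma rep_set_small_coef (f : {poly int}) : C < 0 -> - C <= B ->
  nonneg_poly f -> (forall i, f`_i <= - C - 1) -> rep_set beta (zeval f beta) = [set f]%classic.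
Proof.
move=> C_lt0 C_le_B f_ge0 f_small.
apply/seteqP; split=> [g [g_ge0 g_eq] | g ->] //=.
have fg_zero : zeval (f - g) beta = 0 by rewrite zevalB g_eq subrr.
have [q fg_eq] := quad_dvd_zeval_eq0 (f - g) fg_zero.
suff q_eq0 : q = 0 by apply/esym/eqP; rewrite -subr_eq0 fg_eq q_eq0 mul0r.
apply: quad_multiple_eq0 C_lt0 C_le_B _ => n; rewrite -fg_eq coefB.
by apply: le_trans (f_small n); rewrite gerBl g_ge0.
Qed.

Lemma p_beta_zeval (f : {poly int}) :
  0 <= B -> - B - 1 < C -> C < 0 -> nonneg_poly f ->
  p_beta beta (zeval f beta) = if `[< forall i, f`_i <= - C - 1 >] then Some 1%N else None.
Proof.
move=> B_ge0 BC_gt C_lt0 f_ge0; have C_le_B : - C <= B by lia.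
case: asboolP => [f_small | /existsNP[i /negP]]; last rewrite -ltNge => fi_gt.
  exact: p_beta_set1 (rep_set_small_coef f C_lt0 C_le_B f_ge0 f_small).
by apply: (p_beta_large_coef f i) => //; lia.
Qed.

End QuadraticRoot.

Theorem proposition8 (R : realType) (B C : int) (beta : R) :
  irreducible_poly (quad rat B C) ->
  root (quad R B C) beta ->
  ((0 <= B) -> (0 < C) ->
     forall alpha : R, in_Zbeta beta alpha -> p_beta beta alpha = None)
  /\
  ((0 < B) -> (- B - 1 < C) -> (C < 0) ->
     (forall alpha : R,
        p_beta beta alpha = Some 0%N \/ p_beta beta alpha = Some 1%N
        \/ p_beta beta alpha = None)
     /\
     (forall f : {poly int}, nonneg_poly f ->
        (p_beta beta (zeval f beta) = Some 1%N <->
         forall i : nat, f`_i <= - C - 1))).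
Proof.
move=> quad_irr beta_root; split=> [B_ge0 C_gt0 alpha [g <-] | B_gt0 BC_gt C_lt0].
  have [f f_ge0 <-] := exists_nonneg_poly_zeval beta_root g B_ge0 C_gt0.
  apply: (p_beta_large_coef beta_root f 0) => //; first lia.
  by apply: le_trans (f_ge0 0%N); rewrite oppr_le0 ltW.
have p_beta_rep f := p_beta_zeval beta_root quad_irr f (ltW B_gt0) BC_gt C_lt0.
split=> [alpha | f f_ge0]; last by rewrite p_beta_rep //; case: asboolP.
have [[f [f_ge0 <-]] | no_rep] := pselect (exists f, rep_set beta alpha f).
  by rewrite p_beta_rep //; case: asboolP; auto.
left; apply: p_beta_set0; apply/seteqP; split=> // f f_rep.
by apply: no_rep; exists f.
Qed.
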